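(* Let $X=([0,2]_{\mathbb{Z}}\times[0,2]_{\mathbb{Z}})\cup([2,4]_{\mathbb{Z}}\times[0,3]_{\mathbb{Z}})\subset\mathbb{Z}^2$. Then $$A'=\{(0,0),(4,0),(4,3),(2,3),(0,2)\}$$ is a minimal freezing set for $(X,c_1)$.
   Context: $[a,b]_{\mathbb{Z}}=\{k\in\mathbb{Z}: a\le k\le b\}$. For $x\neq y$ in $\mathbb{Z}^2$, $x,y$ are $c_1$-adjacent if they differ by 1 in exactly one coordinate and agree in the other. $f:X\to X$ is $c_1$-continuous ($f\in C(X,c_1)$) if whenever $x,x'$ are $c_1$-adjacent, $f(x)$ and $f(x')$ are equal or $c_1$-adjacent. $\mathrm{Fix}(f)=\{x:f(x)=x\}$. $A\subset X$ is a freezing set for $(X,c_1)$ if every $f\in C(X,c_1)$ with $A\subset\mathrm{Fix}(f)$ is the identity on $X$; it is minimal if no proper subset of $A$ is a freezing set. *)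

From Stdlib Require Import ZArith.
Open Scope Z_scope.

Definition pt := (Z * Z)%type.

Definition c1_adj (x y : pt) : Prop :=
  (fst x = fst y /\ Z.abs (snd x - snd y) = 1) \/
  (snd x = snd y /\ Z.abs (fst x - fst y) = 1).

(* A self-map of X: a function defined on Z^2 which maps X into X;
   only its values on X matter. *)
Definition maps_into (X : pt -> Prop) (f : pt -> pt) : Prop :=
  forall x, X x -> X (f x).

Definition c1_continuous (X : pt -> Prop) (f : pt -> pt) : Prop :=
  maps_into X f /\
  forall x x', X x -> X x' -> c1_adj x x' -> f x = f x' \/ c1_adj (f x) (f x').

Definition freezing_set (X A : pt -> Prop) : Prop :=
  (forall a, A a -> X a) /\
  forall f, c1_continuous X f -> (forall a, A a -> f a = a) ->
    forall x, X x -> f x = x.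

Definition minimal_freezing_set (X A : pt -> Prop) : Prop :=
  freezing_set X A /\
  forall B : pt -> Prop, (forall b, B b -> A b) -> (exists a, A a /\ ~ B a) ->
    ~ freezing_set X B.

Definition Xex (p : pt) : Prop :=
  (0 <= fst p <= 2 /\ 0 <= snd p <= 2) \/ (2 <= fst p <= 4 /\ 0 <= snd p <= 3).

Definition Aex (p : pt) : Prop :=
  p = (0,0) \/ p = (4,0) \/ p = (4,3) \/ p = (2,3) \/ p = (0,2).

From Stdlib Require Import ZArith Lia.
Open Scope Z_scope.

(* The set X consists of the rows y = 0, 1, 2 (each running from x = 0 to
   x = 4) and the short top row y = 3 (from x = 2 to x = 4).

   A c1-continuous map moves adjacent points to points at taxicab
   distance at most 1, so along a path it is 1-Lipschitz for the taxicab
   metric.  Hence if both ends of a straight horizontal or vertical segment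
   inside X are fixed, the whole segment is fixed: its image is a path of the
   same length joining the same endpoints, and the straight segment is the
   only such path.  The points (0,0), (0,2) of A' pin the left column
   x = 0 and (4,0), (4,3) pin the right column x = 4; these columns pin
   both ends of the rows y = 0, 1, 2, and (2,3), (4,3) pin the row y = 3,
   which exhausts X.

   If a point a of X can be sent to a different point c of X
   which is adjacent to every X-neighbour of a, then the map moving only a is
   continuous; so no set omitting a is freezing.  Each point of A' has such a
   diagonal neighbour c. *)

Definition l1 (p q : pt) : Z := Z.abs (fst p - fst q) + Z.abs (snd p - snd q).

Lemma continuous_l1 (X : pt -> Prop) (f : pt -> pt) (x y : pt) :
  c1_continuous X f -> X x -> X y -> c1_adj x y -> l1 (f x) (f y) <= 1.
Proof.
  intros [_ Hadj] Hx Hy Hxy.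
  destruct (Hadj x y Hx Hy Hxy) as [E | E].
  - rewrite E; unfold l1; lia.
  - unfold l1, c1_adj in *; lia.
Qed.

Lemma l1_path_bound (g : Z -> pt) (n : Z) :
  (forall k, 0 <= k < n -> l1 (g k) (g (k + 1)) <= 1) ->
  forall i j, 0 <= i <= j -> j <= n -> l1 (g i) (g j) <= j - i.
Proof.
  intros Hstep i j Hij Hjn.
  assert (Hgrow : forall d, 0 <= d -> i + d <= n -> l1 (g i) (g (i + d)) <= d).
  { apply (natlike_ind (fun d => i + d <= n -> l1 (g i) (g (i + d)) <= d)).
    - intros _; rewrite Z.add_0_r; unfold l1; lia.
    - intros d Hd IH Hdn.
      replace (i + Z.succ d) with (i + d + 1) by ring.
      specialize (IH ltac:(lia)).
      specialize (Hstep (i + d) ltac:(lia)).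
      unfold l1 in *; lia. }
  replace (g j) with (g (i + (j - i))) by (f_equal; ring).
  apply Hgrow; lia.
Qed.

Definition along (a e : pt) (k : Z) : pt := (fst a + k * fst e, snd a + k * snd e).

Definition axis_dir (e : pt) : Prop := e = (1, 0) \/ e = (0, 1).

Lemma along_0 (a e : pt) : along a e 0 = a.
Proof. destruct a; unfold along; simpl; f_equal; ring. Qed.

Lemma along_adj (a e : pt) (k : Z) : axis_dir e -> c1_adj (along a e k) (along a e (k + 1)).
Proof. intros [-> | ->]; unfold c1_adj, along; simpl; lia. Qed.

Lemma straight_geodesic (a e p : pt) (n k : Z) : axis_dir e ->
  l1 a p <= k -> l1 p (along a e n) <= n - k -> p = along a e k.
Proof.
  destruct a as [a1 a2], p as [p1 p2].
  intros [-> | ->]; unfold l1, along; simpl; intros H1 H2;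
    f_equal; lia.
Qed.

Lemma segment_frozen (X : pt -> Prop) (f : pt -> pt) (a e : pt) (n : Z) :
  c1_continuous X f -> axis_dir e ->
  (forall k, 0 <= k <= n -> X (along a e k)) ->
  f a = a -> f (along a e n) = along a e n ->
  forall k, 0 <= k <= n -> f (along a e k) = along a e k.
Proof.
  intros Hf He HX Ha Hb k Hk.
  set (g := fun k => f (along a e k)).
  assert (Hstep : forall k, 0 <= k < n -> l1 (g k) (g (k + 1)) <= 1).
  { intros i Hi; apply (continuous_l1 X); auto using along_adj.
    - apply HX; lia.
    - apply HX; lia. }
  assert (Hfrom_a : l1 (g 0) (g k) <= k - 0) by (apply (l1_path_bound g n Hstep); lia).
  rewrite Z.sub_0_r in Hfrom_a.
  assert (Hto_b : l1 (g k) (g n) <= n - k) by (apply (l1_path_bound g n Hstep); lia).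
  unfold g in Hfrom_a, Hto_b; rewrite along_0, Ha, Hb in *.
  apply (straight_geodesic a e _ n k); assumption.
Qed.

Lemma row_frozen (X : pt -> Prop) (f : pt -> pt) (y l r : Z) :
  c1_continuous X f -> (forall x, l <= x <= r -> X (x, y)) ->
  f (l, y) = (l, y) -> f (r, y) = (r, y) ->
  forall x, l <= x <= r -> f (x, y) = (x, y).
Proof.
  intros Hf HX Hl Hr x Hx.
  assert (E : forall k, along (l, y) (1, 0) k = (l + k, y)).
  { intros k; unfold along; simpl; f_equal; ring. }
  replace (x, y) with (along (l, y) (1, 0) (x - l)) by (rewrite E; f_equal; ring).
  apply (segment_frozen X f _ _ (r - l)); try (left; reflexivity); auto; try lia.
  - intros k Hk; rewrite E; apply HX; lia.
  - rewrite E; replace (l + (r - l)) with r by ring; exact Hr.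
Qed.

Lemma column_frozen (X : pt -> Prop) (f : pt -> pt) (x b t : Z) :
  c1_continuous X f -> (forall y, b <= y <= t -> X (x, y)) ->
  f (x, b) = (x, b) -> f (x, t) = (x, t) ->
  forall y, b <= y <= t -> f (x, y) = (x, y).
Proof.
  intros Hf HX Hb Ht y Hy.
  assert (E : forall k, along (x, b) (0, 1) k = (x, b + k)).
  { intros k; unfold along; simpl; f_equal; ring. }
  replace (x, y) with (along (x, b) (0, 1) (y - b)) by (rewrite E; f_equal; ring).
  apply (segment_frozen X f _ _ (t - b)); try (right; reflexivity); auto; try lia.
  - intros k Hk; rewrite E; apply HX; lia.
  - rewrite E; replace (b + (t - b)) with t by ring; exact Ht.
Qed.

Definition pt_eq_dec (p q : pt) : {p = q} + {p <> q}.
Proof. decide equality; apply Z.eq_dec. Defined.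

Definition redirect (a c : pt) (p : pt) : pt :=
  if pt_eq_dec p a then c else p.

Lemma redirect_continuous (X : pt -> Prop) (a c : pt) :
  X c -> (forall y, X y -> c1_adj a y -> c = y \/ c1_adj c y) ->
  c1_continuous X (redirect a c).
Proof.
  intros Hc Hnb; split.
  - intros x Hx; unfold redirect; destruct pt_eq_dec; auto.
  - intros x x' Hx Hx' Hxx'; unfold redirect.
    destruct (pt_eq_dec x a) as [-> | _], (pt_eq_dec x' a) as [-> | _].
    + left; reflexivity.
    + exact (Hnb x' Hx' Hxx').
    + assert (Hsym : c1_adj a x) by (unfold c1_adj in *; lia).
      destruct (Hnb x Hx Hsym) as [E | E]; [left; auto | right].
      unfold c1_adj in *; lia.
    + right; exact Hxx'.
Qed.

Lemma movable_not_frozen (X B : pt -> Prop) (a c : pt) :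
  X a -> ~ B a -> X c -> c <> a ->
  (forall y, X y -> c1_adj a y -> c = y \/ c1_adj c y) ->
  ~ freezing_set X B.
Proof.
  intros Ha HBa Hc Hca Hnb [_ Hfreeze].
  apply Hca.
  assert (Hmove : redirect a c a = c).
  { unfold redirect; destruct pt_eq_dec; congruence. }
  rewrite <- Hmove.
  apply (Hfreeze _ (redirect_continuous X a c Hc Hnb)); auto.
  intros b Hb; unfold redirect; destruct pt_eq_dec; congruence.
Qed.

Theorem mainTheorem3 : minimal_freezing_set Xex Aex.
Proof.
  split; [split |].
  - intros a Ha; unfold Aex, Xex in *; intuition subst; simpl; lia.
  - intros f Hf HA.
    assert (Hleft : forall y, 0 <= y <= 2 -> f (0, y) = (0, y)).
    { apply (column_frozen Xex f 0 0 2 Hf); try (apply HA; red; tauto).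
      intros y Hy; unfold Xex; simpl; lia. }
    assert (Hright : forall y, 0 <= y <= 3 -> f (4, y) = (4, y)).
    { apply (column_frozen Xex f 4 0 3 Hf); try (apply HA; red; tauto).
      intros y Hy; unfold Xex; simpl; lia. }
    (* Every point of X lies on a row pinned at both ends. *)
    intros [x y] Hx; unfold Xex in Hx; simpl in Hx.
    assert (y = 3 \/ 0 <= y <= 2) as [-> | Hy] by lia.
    + apply (row_frozen Xex f 3 2 4 Hf); try (apply HA; red; tauto); try lia.
      intros x' Hx'; unfold Xex; simpl; lia.
    + apply (row_frozen Xex f y 0 4 Hf); [| apply Hleft | apply Hright | ]; try lia.
      intros x' Hx'; unfold Xex; simpl; lia.
  - (* Each point of A' can be moved to a diagonal neighbour. *)
    intros B _ [a [Ha HBa]].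
    destruct Ha as [-> | [-> | [-> | [-> | ->]]]];
      [ apply (movable_not_frozen Xex B (0, 0) (1, 1))
      | apply (movable_not_frozen Xex B (4, 0) (3, 1))
      | apply (movable_not_frozen Xex B (4, 3) (3, 2))
      | apply (movable_not_frozen Xex B (2, 3) (3, 2))
      | apply (movable_not_frozen Xex B (0, 2) (1, 1)) ];
      auto; try (unfold Xex; simpl; lia); try discriminate;
      intros [y1 y2] Hy Hay; right; unfold Xex, c1_adj in *; cbn [fst snd] in *; lia.
Qed.
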